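(* Let $k\geq0$ and $S=sgp^+\langle a,b\mid a^kb=ba\rangle$. Then $S$ is prefix-automatic if and only if $k\leq1$.
   Context: $sgp^+\langle A\mid R\rangle$ is the free semigroup $A^+$ of nonempty words modulo the congruence generated by $R$; $a^0$ is the empty word. Automaticity: regular = accepted by a finite automaton. With $\$\notin A$, $A(2,\$)=(A\cup\{\$\})^2\setminus\{(\$,\$)\}$; $(\alpha,\beta)\delta_A^R$ is the word over $A(2,\$)$ obtained by padding the shorter word on the right with $\$$'s and reading letter pairs. For a semigroup $S$ generated by finite $A$, $\phi:A^+\to S$ canonical, $L\subseteq A^+$ regular with $\phi(L)=S$, write $\alpha=\beta$ if $\phi(\alpha)=\phi(\beta)$ and $L_a^\$=\{(\alpha,\beta)\delta^R_A:\alpha,\beta\in L,\alpha a=\beta\}$ for $a\in A\cup\{\varepsilon\}$. $S$ is automatic if some such $(A,L)$ has all $L_a^\$$ regular; prefix-automatic if some such automatic structure also has $\{(\alpha,\beta)\delta_A^R:\alpha\in L,\beta\in\mathrm{Pref}(L),\alpha=\beta\}$ regular ($\mathrm{Pref}(L)$ = prefixes of words of $L$). *)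

From HB Require Import structures.
From mathcomp Require Import all_boot.
Set Implicit Arguments.
Unset Strict Implicit.
Unset Printing Implicit Defensive.

Record dfa (X : finType) := Dfa {
  dfa_state : finType;
  dfa_start : dfa_state;
  dfa_final : pred dfa_state;
  dfa_trans : dfa_state -> X -> dfa_state }.

Definition dfa_accepts (X : finType) (M : dfa X) (w : seq X) : bool :=
  @dfa_final X M (foldl (@dfa_trans X M) (@dfa_start X M) w).

Definition regular (X : finType) (L : seq X -> Prop) : Prop :=
  exists M : dfa X, forall w, dfa_accepts M w <-> L w.

Inductive pcong (Sigma : eqType) (R : seq (seq Sigma * seq Sigma))
  : seq Sigma -> seq Sigma -> Prop :=
| pcong_refl u : pcong R u u
| pcong_sym u v : pcong R u v -> pcong R v u
| pcong_trans u v w : pcong R u v -> pcong R v w -> pcong R u w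
| pcong_rel (x y : seq Sigma) (r : seq Sigma * seq Sigma) :
    r \in R -> pcong R (x ++ r.1 ++ y) (x ++ r.2 ++ y).

(* The padding symbol $ is None; letters of A are Some _. *)
Definition pad (B : Type) (al be : seq B) : seq (option B * option B) :=
  zip (map Some al ++ nseq (size be - size al) None)
      (map Some be ++ nseq (size al - size be) None).

(* A finite generating set of S = sgp^+<Sigma | R> is a finite type B
   with a map g : B -> Sigma^+ choosing a (nonempty) representative word
   of each generator; distinct generators are distinct elements of S.
   phi : B^+ -> S is then alpha |-> class of (flatten (map g alpha)). *)
Definition phi (Sigma : Type) (B : Type) (g : B -> seq Sigma) (al : seq B) :=
  flatten (map g al).

Definition gen_set (Sigma : eqType) (R : seq (seq Sigma * seq Sigma))
  (B : finType) (g : B -> seq Sigma) : Prop :=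
  (forall x, g x <> [::]) /\ (forall x y, pcong R (g x) (g y) -> x = y).

(* L_c^$ for c in A \cup {epsilon} (c = None is epsilon) *)
Definition Lmult (Sigma : eqType) (R : seq (seq Sigma * seq Sigma))
  (B : finType) (g : B -> seq Sigma) (L : seq B -> Prop) (c : option B)
  : seq (option B * option B) -> Prop :=
  fun p => exists al be, [/\ L al, L be,
    pcong R (phi g (al ++ oapp (fun x => [:: x]) [::] c)) (phi g be)
    & p = pad al be].

Definition auto_struct (Sigma : eqType) (R : seq (seq Sigma * seq Sigma))
  (B : finType) (g : B -> seq Sigma) (L : seq B -> Prop) : Prop :=
  [/\ gen_set R g,
      (forall al, L al -> al <> [::]),
      regular L,
      (forall w : seq Sigma, w <> [::] ->
         exists al, L al /\ pcong R (phi g al) w)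
    & forall c : option B, regular (Lmult R g L c)].

Definition automatic (Sigma : eqType) (R : seq (seq Sigma * seq Sigma)) : Prop :=
  exists (B : finType) (g : B -> seq Sigma) (L : seq B -> Prop),
    auto_struct R g L.

Definition Lpref (Sigma : eqType) (R : seq (seq Sigma * seq Sigma))
  (B : finType) (g : B -> seq Sigma) (L : seq B -> Prop)
  : seq (option B * option B) -> Prop :=
  fun p => exists al be, [/\ L al, (exists ga, L ga /\ prefix be ga),
    pcong R (phi g al) (phi g be) & p = pad al be].

Definition prefix_automatic (Sigma : eqType) (R : seq (seq Sigma * seq Sigma))
  : Prop :=
  exists (B : finType) (g : B -> seq Sigma) (L : seq B -> Prop),
    auto_struct R g L /\ regular (Lpref R g L).

Inductive ab := La | Lb.
Definition ab_to_bool (x : ab) : bool := if x is Lb then true else false.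
Definition bool_to_ab (x : bool) : ab := if x then Lb else La.
Lemma ab_boolK : cancel ab_to_bool bool_to_ab. Proof. by case. Qed.
HB.instance Definition _ := Finite.copy ab (can_type ab_boolK).

Definition relk (k : nat) : seq (seq ab * seq ab) :=
  [:: (nseq k La ++ [:: Lb], [:: Lb; La])].

From mathcomp Require Import all_boot zify.
Set Implicit Arguments.
Unset Strict Implicit.
Unset Printing Implicit Defensive.

(* For k <= 1 the words a^n b^m with n + m > 0 are normal forms of S (the relation
   b a = a^k b moves every b to the right), and multiplying a^n b^m on the right by a
   or b, or taking a prefix, yields a^n' b^m' with n' <= n + 1 and m' <= m + 1.  The
   padded languages of the structure are therefore made of blocks of repeated letter
   pairs and are regular.

   For k >= 2, S is not even automatic.  A word w represents a^(aexp w) b^m where m is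
   its number of b's, and the weight aexp w + m is superadditive, hence strictly
   increasing along prefixes.  If a DFA recognises L_c and accepts the padding of
   (alpha, beta), every prefix of the padded pair extends to an accepted one by words
   shorter than the number of states; for each prefix of alpha longer than beta this
   pins its element down to boundedly many values, all distinct, so |alpha| - |beta|
   and |beta| - |alpha| are bounded by a uniform D.  Following representatives along
   a^K, a^K b, ..., a^K b^(j+1) and b, ..., b^(j+1), b^(j+1) a = a^K b^(j+1) with
   K = k^(j+1) then gives a representative of a^K of length O(j), whereas every
   such representative has length at least K / max |g x|. *)

Definition dfa_run (X : finType) (M : dfa X) (s : dfa_state M) (w : seq X) :=
  foldl (@dfa_trans X M) s w.
Arguments dfa_run {X} M s w.

Lemma dfa_run_cat (X : finType) (M : dfa X) s u v :
  dfa_run M s (u ++ v) = dfa_run M (dfa_run M s u) v.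
Proof. exact: foldl_cat. Qed.

Section RegularLanguages.
Variable X : finType.
Implicit Types (L : seq X -> Prop) (x : X) (w : seq X).

Definition lcat (L1 L2 : seq X -> Prop) w := exists u v, [/\ w = u ++ v, L1 u & L2 v].

Lemma lcat_cat (L1 L2 : seq X -> Prop) u v : L1 u -> L2 v -> lcat L1 L2 (u ++ v).
Proof. by exists u, v. Qed.

Lemma regular_ext L1 L2 : (forall w, L1 w <-> L2 w) -> regular L1 -> regular L2.
Proof. by move=> E [M HM]; exists M => w; rewrite -E. Qed.

Definition dfa_prod (op : bool -> bool -> bool) (M1 M2 : dfa X) : dfa X :=
  @Dfa X (dfa_state M1 * dfa_state M2)%type (dfa_start M1, dfa_start M2)
    (fun s => op (dfa_final s.1) (dfa_final s.2))
    (fun s x => (dfa_trans s.1 x, dfa_trans s.2 x)).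

Lemma dfa_prod_accepts op M1 M2 w :
  dfa_accepts (dfa_prod op M1 M2) w = op (dfa_accepts M1 w) (dfa_accepts M2 w).
Proof.
rewrite /dfa_accepts /=.
suff -> : forall s1 s2, foldl (fun s x => (dfa_trans s.1 x, dfa_trans s.2 x)) (s1, s2) w
  = (foldl (@dfa_trans X M1) s1 w, foldl (@dfa_trans X M2) s2 w) by [].
by elim: w => //= x w IH s1 s2; rewrite IH.
Qed.

Lemma regularU L1 L2 : regular L1 -> regular L2 -> regular (fun w => L1 w \/ L2 w).
Proof.
move=> [M1 H1] [M2 H2]; exists (dfa_prod orb M1 M2) => w.
by rewrite dfa_prod_accepts -H1 -H2; split => /orP.
Qed.

Lemma regularI L1 L2 : regular L1 -> regular L2 -> regular (fun w => L1 w /\ L2 w).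
Proof.
move=> [M1 H1] [M2 H2]; exists (dfa_prod andb M1 M2) => w.
by rewrite dfa_prod_accepts -H1 -H2; split => /andP.
Qed.

Lemma regular_nonempty : regular (fun w => w <> [::]).
Proof.
exists (@Dfa X bool false id (fun _ _ => true)) => w; rewrite /dfa_accepts /=.
case: w => [|x w] /=; first by split.
by have -> : foldl (fun _ _ => true) true w by elim: w.
Qed.

Lemma regular_seq1 x : regular (fun w => w = [:: x]).
Proof.
exists (@Dfa X (option bool) None (pred1 (Some true))
          (fun s y => if s is None then Some (y == x) else Some false)) => w.
rewrite /dfa_accepts /=; case: w => [|y [|z w]] /=; first by split.
- by split => [/eqP [/eqP ->] | [->]] //=; rewrite eqxx.
- suff -> : forall v, foldl (fun s y => if s is None then Some (y == x) else Some false)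
                          (Some false) v = Some false by [].
  by elim.
Qed.

Lemma regular_nseq x : regular (fun w => exists n, w = nseq n x).
Proof.
exists (@Dfa X bool true id (fun s y => s && (y == x))) => w.
rewrite /dfa_accepts /=.
have -> : forall s, foldl (fun s y => s && (y == x)) s w = s && all (pred1 x) w.
  by elim: w => [|y w IH] s /=; rewrite ?andbT // IH andbA.
split => [/all_pred1P ->|[n ->]]; first by exists (size w).
by rewrite all_nseq /= eqxx orbT.
Qed.

Section Concatenation.
Variables M1 M2 : dfa X.

Let enter (s : dfa_state M1) : {set dfa_state M2} :=
  if dfa_final s then [set dfa_start M2] else set0.

(* The second component holds the states reached by M2 from every split point at
   which the prefix read so far is accepted by M1. *)
Definition dfa_cat : dfa X :=
  @Dfa X (dfa_state M1 * {set dfa_state M2})%type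
    (dfa_start M1, enter (dfa_start M1))
    (fun s => [exists q in s.2, dfa_final q])
    (fun s x => let s1 := dfa_trans s.1 x in
                (s1, [set dfa_trans q x | q in s.2] :|: enter s1)).

Lemma dfa_cat_run s P w :
  dfa_final (dfa_run dfa_cat (s, P) w) <->
  (exists2 q, q \in P & dfa_final (dfa_run M2 q w)) \/
  exists u v, [/\ w = u ++ v, u != [::], dfa_final (dfa_run M1 s u) & dfa_accepts M2 v].
Proof.
elim: w s P => [|x w IH] s P /=.
  split=> [/existsP [q /andP [Pq fq]]|[[q Pq fq]|[[|y u] [v []]]]] //.
    by left; exists q.
  by apply/existsP; exists q; rewrite Pq fq.
rewrite IH; split.
- case=> [[q /setUP [/imsetP [p Pp ->]|qe] fq]|[u [v [-> u0 fu fv]]]].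
  + by left; exists p.
  + move: qe; rewrite /enter; case: ifP => [f1 /set1P eq_q|_]; last by rewrite inE.
    right; exists [:: x], w.
    by split; rewrite // /dfa_accepts -eq_q.
  + by right; exists (x :: u), v.
- case=> [[q Pq fq]|[[|y u] [v [//= [<- ->] _ fu fv]]]].
  + by left; exists (dfa_trans q x) => //; apply/setUP; left; apply: imset_f.
  + case: u fu => [|z u] fu.
      left; exists (dfa_start M2); last exact: fv.
      by rewrite /enter fu !inE eqxx orbT.
    by right; exists (z :: u), v.
Qed.

End Concatenation.

Lemma regular_cat L1 L2 : regular L1 -> regular L2 -> regular (lcat L1 L2).
Proof.
move=> [M1 H1] [M2 H2]; exists (dfa_cat M1 M2) => w.
rewrite /dfa_accepts dfa_cat_run; split.
- case=> [[q]|[u [v [-> _ fu fv]]]]; last by exists u, v; split; [|apply/H1|apply/H2].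
  case: ifP => [f1 /set1P -> fw|_]; last by rewrite inE.
  by exists [::], w; split; [|apply/H1|apply/H2].
- case=> [[|x u] [v [-> Lu Lv]]]; [left | right].
  + exists (dfa_start M2); last by apply/H2.
    by move/H1: Lu; rewrite /dfa_accepts => ->; rewrite inE.
  + by exists (x :: u), v; split => //; [apply/H1 | apply/H2].
Qed.

Lemma dfa_run_short M s w : dfa_final (dfa_run M s w) ->
  exists2 z, size z < #|dfa_state M| & dfa_final (dfa_run M s z).
Proof.
move: {2}(size w) (leqnn (size w)) => n; elim: n w => [|n IH] w le_wn fw.
  by case: w le_wn fw => // _ fw; exists [::] => //; apply/card_gt0P; exists s.
have [small|big] := ltnP (size w) #|dfa_state M|; first by exists w.
pose states := [seq dfa_run M s (take i w) | i <- iota 0 (size w).+1].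
have /(uniqPn s) [i [j [lt_ij lt_j eq_ij]]] : ~~ uniq states.
  apply/negP => /card_uniqP card_states.
  by have := max_card (mem states); rewrite card_states size_map size_iota; lia.
rewrite size_map size_iota in lt_j; have lt_i := ltn_trans lt_ij lt_j.
rewrite !(nth_map 0) ?size_iota ?nth_iota // ?add0n in eq_ij.
apply: (IH (take i w ++ drop j w)).
- rewrite size_cat size_take size_drop; case: ifP => h; lia.
- by rewrite dfa_run_cat eq_ij -dfa_run_cat cat_take_drop.
Qed.

End RegularLanguages.

Section Padding.
Variable T : Type.
Implicit Types u v : seq T.

Lemma pad_cat u1 u2 v1 v2 : size u1 = size v1 ->
  pad (u1 ++ u2) (v1 ++ v2) = pad u1 v1 ++ pad u2 v2.
Proof.
move=> eq_size; rewrite /pad !size_cat eq_size !subnDl subnn !cats0 !map_cat -!catA.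
by rewrite zip_cat ?size_map.
Qed.

Lemma pad_cons x y u v : pad (x :: u) (y :: v) = (Some x, Some y) :: pad u v.
Proof. by rewrite /pad /= !subSS. Qed.

Lemma pad_nil_l v : pad [::] v = [seq (None, Some y) | y <- v].
Proof. by rewrite /pad subn0; elim: v => //= y v ->. Qed.

Lemma pad_nil_r u : pad u [::] = [seq (Some x, None) | x <- u].
Proof. by rewrite /pad subn0 cats0; elim: u => //= x u ->. Qed.

Lemma pad_diag u : pad u u = [seq (Some x, Some x) | x <- u].
Proof. by rewrite /pad subnn !cats0; elim: u => //= x u ->. Qed.

Let pmap_pad u d : pmap id (map Some u ++ nseq d None) = u.
Proof. by rewrite pmap_cat (map_pK (g := Some)) //; elim: d => //; rewrite cats0. Qed.

Lemma pad_catr u v :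
  pad u (u ++ v) = [seq (Some x, Some x) | x <- u] ++ [seq (None, Some y) | y <- v].
Proof. by rewrite -[u in pad u]cats0 pad_cat // pad_diag pad_nil_l. Qed.

Lemma pad_unzip1 u v : pmap id (unzip1 (pad u v)) = u.
Proof. by rewrite unzip1_zip ?pmap_pad // !size_cat !size_map !size_nseq; lia. Qed.

Lemma pad_unzip2 u v : pmap id (unzip2 (pad u v)) = v.
Proof. by rewrite unzip2_zip ?pmap_pad // !size_cat !size_map !size_nseq; lia. Qed.

Lemma pad_cat_suffix u v z u' v' : pad u v ++ z = pad u' v' ->
  exists r r', [/\ u' = u ++ r, v' = v ++ r', size r <= size z & size r' <= size z].
Proof.
move=> eq_pad; exists (pmap id (unzip1 z)), (pmap id (unzip2 z)).
have size_z (f : option T * option T -> option T) : size (pmap id (map f z)) <= size z.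
  by rewrite size_pmap (leq_trans (count_size _ _)) ?size_map.
split; rewrite ?size_z //.
- by rewrite -(pad_unzip1 u' v') -eq_pad /unzip1 map_cat pmap_cat pad_unzip1.
- by rewrite -(pad_unzip2 u' v') -eq_pad /unzip2 map_cat pmap_cat pad_unzip2.
Qed.

Lemma take_pad t u v : take t (pad u v) = pad (take t u) (take t v).
Proof.
elim: t u v => [|t IH] [|x u] [|y v] //;
  by rewrite ?pad_cons ?pad_nil_l ?pad_nil_r /= ?pad_cons ?pad_nil_l ?pad_nil_r -?map_take ?IH.
Qed.

End Padding.

Section Congruence.
Variables (Sigma : eqType) (R : seq (seq Sigma * seq Sigma)).

Lemma pcong_ctx x y u v : pcong R u v -> pcong R (x ++ u ++ y) (x ++ v ++ y).
Proof.
elim=> {u v} [u|u v _ IH|u v w _ IH1 _ IH2|x0 y0 r Rr].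
- exact: pcong_refl.
- exact: pcong_sym.
- exact: pcong_trans IH2.
- have e s : x ++ (x0 ++ s ++ y0) ++ y = (x ++ x0) ++ s ++ (y0 ++ y) by rewrite !catA.
  by rewrite !e; apply: pcong_rel.
Qed.

Lemma pcong_cat u1 u2 v1 v2 :
  pcong R u1 v1 -> pcong R u2 v2 -> pcong R (u1 ++ u2) (v1 ++ v2).
Proof.
move=> /(pcong_ctx [::] u2) e1 /(pcong_ctx v1 [::]) e2.
by apply: pcong_trans e1 _; rewrite !cats0 in e2.
Qed.

End Congruence.

Lemma phi_seq1 (X : Type) (al : seq X) : phi (fun x => [:: x]) al = al.
Proof. by elim: al => //= x al IH; rewrite /phi /= -/(phi _ _) IH. Qed.

Section Phi.
Variables (Sigma : Type) (B : finType) (g : B -> seq Sigma).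

Definition gen_size := \max_(x : B) size (g x).

Lemma phi_cat u v : phi g (u ++ v) = phi g u ++ phi g v.
Proof. by rewrite /phi map_cat flatten_cat. Qed.

Lemma size_phi u : size (phi g u) <= size u * gen_size.
Proof.
elim: u => [|x u IH] //; rewrite -cat1s phi_cat size_cat mulSn leq_add //.
by rewrite /phi /= cats0 (@leq_bigmax _ (fun y => size (g y))).
Qed.

Lemma phi_neq0 u : (forall x, g x <> [::]) -> u <> [::] -> phi g u <> [::].
Proof.
by move=> g_neq0; case: u => // x u _; rewrite /phi /=; have := @g_neq0 x; case: (g x).
Qed.

End Phi.

Section NormalForms.
Variable k : nat.
Local Notation R := (relk k).

Fixpoint aexp (w : seq ab) : nat :=
  if w is x :: w then (if x is La then (aexp w).+1 else k * aexp w) else 0.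

Lemma aexp_cat u v : aexp (u ++ v) = aexp u + k ^ count_mem Lb u * aexp v.
Proof.
elim: u => [|[] u IH] /=; first by rewrite mul1n.
- by rewrite IH addSn.
- by rewrite IH mulnDr expnS mulnA.
Qed.

Lemma aexp_nseqa n : aexp (nseq n La) = n.
Proof. by elim: n => //= n ->. Qed.

Lemma pcong_aexp_count u v : pcong R u v ->
  aexp u = aexp v /\ count_mem Lb u = count_mem Lb v.
Proof.
elim=> {u v} [u|u v _ [-> ->]|u v w _ [-> ->] _ [-> ->]|x y r] //.
rewrite mem_seq1 => /eqP -> /=.
rewrite !aexp_cat !count_cat /= aexp_nseqa count_nseq /=.
by split; [congr (_ + _ * _); rewrite expn1 | ]; lia.
Qed.

Definition nf n m := nseq n La ++ nseq m Lb.

Definition nform w := nf (aexp w) (count_mem Lb w).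

Lemma aexp_nf n m : aexp (nf n m) = n.
Proof.
rewrite aexp_cat aexp_nseqa; suff -> : aexp (nseq m Lb) = 0 by rewrite muln0 addn0.
by elim: m => //= m ->; rewrite muln0.
Qed.

Lemma count_nf n m : count_mem Lb (nf n m) = m.
Proof. by rewrite count_cat !count_nseq /= mul1n. Qed.

Lemma nformK n m : nform (nf n m) = nf n m.
Proof. by rewrite /nform aexp_nf count_nf. Qed.

Lemma nform_nf_rcons n m x :
  nform (nf n m ++ [:: x]) = if x is La then nf (n + k ^ m) m else nf n m.+1.
Proof.
rewrite /nform aexp_cat aexp_nf count_nf count_cat count_nf.
by case: x => /=; rewrite ?muln1 ?muln0 ?addn0 ?addn1.
Qed.

Lemma pcong_b_nseqa n : pcong R (Lb :: nseq n La) (nseq (k * n) La ++ [:: Lb]).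
Proof.
elim: n => [|n IH]; first by rewrite muln0; apply: pcong_refl.
have rel : pcong R [:: Lb; La] (nseq k La ++ [:: Lb]).
  by apply: pcong_sym; have := @pcong_rel _ R [::] [::] _ (mem_head _ _); rewrite /= !cats0.
apply: pcong_trans (pcong_cat rel (pcong_refl _ (nseq n La))) _.
rewrite -catA mulnS nseqD -catA.
exact: pcong_cat (pcong_refl _ _) IH.
Qed.

Lemma pcong_nform w : w <> [::] -> pcong R w (nform w).
Proof.
elim: w => // x w IH _; case: w IH => [_|y w IH].
  by case: x; rewrite /nform /= ?muln0; apply: pcong_refl.
have /IH {}IH : y :: w <> [::] by [].
move: (y :: w) IH => {y}w IH.
apply: pcong_trans (pcong_cat (pcong_refl _ [:: x]) IH) _.
case: x; rewrite /nform /nf /=; first exact: pcong_refl.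
rewrite add0n -[Lb :: nseq _ Lb]cat1s catA.
exact: pcong_cat (pcong_b_nseqa _) (pcong_refl _ _).
Qed.

Lemma pcong_nform_eq u v : pcong R u v -> nform u = nform v.
Proof. by move=> /pcong_aexp_count [eq_a eq_b]; rewrite /nform eq_a eq_b. Qed.

Definition weight w := aexp w + count_mem Lb w.

Lemma weight_gt0 w : w <> [::] -> 0 < weight w.
Proof. by case: w => [|[] w] //= _; rewrite /weight /=; lia. Qed.

Lemma take_nf i n m : take i (nf n m) = nf (minn i n) (minn (i - n) m).
Proof.
have take_nseq' j l x : take j (nseq l x) = nseq (minn j l) x.
  by elim: l j => [|l IH] [|j] //=; rewrite ?minn0 // minnSS IH.
rewrite /nf take_cat size_nseq; case: ltnP => [lt_in|le_ni]; last by rewrite take_nseq'.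
have -> : i - n = 0 by lia.
by rewrite take_nseq' (minn_idPl (ltnW lt_in)) min0n cats0.
Qed.

End NormalForms.

Lemma regular_blocks (X : finType) (x y : X) :
  regular (fun w => exists n m, 0 < n + m /\ w = nseq n x ++ nseq m y).
Proof.
apply: regular_ext (regularI (@regular_nonempty X) (regular_cat (regular_nseq x) (regular_nseq y))).
move=> w; split=> [[w0 [u [v [eq_w [n eq_u] [m eq_v]]]]]|[n [m [nm0 ->]]]].
  exists n, m; split; last by rewrite eq_w eq_u eq_v.
  rewrite lt0n addn_eq0; apply: contra_notN w0 => /andP [/eqP n0 /eqP m0].
  by rewrite eq_w eq_u eq_v n0 m0.
split; last by apply: lcat_cat; [exists n | exists m].
by case: n nm0 => [|n]; case: m.
Qed.

Lemma ex_pos_split (T : Type) (F : nat -> nat -> T) p :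
  (exists n m, 0 < n + m /\ p = F n m) <->
  (exists n, 0 < n /\ p = F n 0) \/ (exists n m, p = F n m.+1).
Proof.
split=> [[n [[|m] [nm0 ->]]]|[[n [n0 ->]]|[n [m ->]]]].
- by left; exists n; rewrite addn0 in nm0.
- by right; exists n, m.
- by exists n, 0; rewrite addn0.
- by exists n, m.+1; rewrite addnS.
Qed.

Section PrefixAutomatic.
Variable k : nat.
Local Notation R := (relk k).

Definition is_nf w := exists n m, 0 < n + m /\ w = nf n m.

Lemma is_nf_nform w : w <> [::] -> is_nf (nform k w).
Proof. by move=> /(weight_gt0 k) w0; exists (aexp k w), (count_mem Lb w). Qed.

Lemma Lmult_nfE c p : Lmult R (fun x => [:: x]) is_nf c p <->
  exists n m, 0 < n + m /\
    p = pad (nf n m) (nform k (nf n m ++ oapp (fun x => [:: x]) [::] c)).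
Proof.
rewrite /Lmult; split=> [[al [be [[n [m [nm0 ->]]] [n' [m' [_ ->]]]]]]|[n [m [nm0 ->]]]].
  rewrite !phi_seq1 => /(@pcong_nform_eq k) eq_nf ->.
  by exists n, m; rewrite eq_nf nformK.
have nf0 : nf n m ++ oapp (fun x => [:: x]) [::] c <> [::].
  by case: n m nm0 => [|n] [|m].
exists (nf n m), (nform k (nf n m ++ oapp (fun x => [:: x]) [::] c)); split=> //.
- by exists n, m.
- exact: is_nf_nform.
- by rewrite !phi_seq1; apply: pcong_nform.
Qed.

Lemma Lpref_nfE p : Lpref R (fun x => [:: x]) is_nf p <->
  exists n m, 0 < n + m /\ p = pad (nf n m) (nf n m).
Proof.
rewrite /Lpref; split=> [[al [be [[n [m [nm0 ->]]] [_ [[n' [m' [_ ->]]]]]]]]|].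
  rewrite prefixE take_nf => /eqP <-; rewrite !phi_seq1 => /(@pcong_nform_eq k).
  by rewrite !nformK => <- ->; exists n, m.
move=> [n [m [nm0 ->]]]; exists (nf n m), (nf n m); split=> //.
- by exists n, m.
- by exists (nf n m); split; [exists n, m | apply: prefix_refl].
- exact: pcong_refl.
Qed.

Local Notation AA := (Some La, Some La).
Local Notation BB := (Some Lb, Some Lb).

Lemma pad_nf n m : pad (nf n m) (nf n m) = nseq n AA ++ nseq m BB.
Proof. by rewrite pad_diag map_cat !map_nseq. Qed.

Lemma pad_nf_rcons n m x :
  pad (nf n m) (nf n m ++ [:: x]) = (nseq n AA ++ nseq m BB) ++ [:: (None, Some x)].
Proof. by rewrite pad_catr map_cat !map_nseq. Qed.

Lemma pad_nf_a n : pad (nf n 0) (nf n.+1 0) = nseq n AA ++ [:: (None, Some La)].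
Proof.
have -> : nf n.+1 0 = nf n 0 ++ [:: La] by rewrite /nf !cats0 -addn1 nseqD.
by rewrite pad_nf_rcons cats0.
Qed.

Lemma pad_nf_ab n m : pad (nf n m.+1) (nf n.+1 m.+1) =
  nseq n AA ++ (Some Lb, Some La) :: nseq m BB ++ [:: (None, Some Lb)].
Proof.
have -> : nf n.+1 m.+1 = nseq n La ++ La :: nseq m Lb ++ [:: Lb].
  by rewrite /nf -[n.+1]addn1 -[m.+1]addn1 !nseqD -catA.
by rewrite pad_cat ?size_nseq // pad_diag pad_cons pad_catr !map_nseq.
Qed.

Lemma regular_family_ext (X : finType) (F G : nat -> nat -> seq X) :
  regular (fun p => exists n m, 0 < n + m /\ p = G n m) ->
  (forall n m, F n m = G n m) ->
  regular (fun p => exists n m, 0 < n + m /\ p = F n m).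
Proof.
by move=> + eFG; apply: regular_ext => p; split=> -[n [m [nm0 ->]]]; exists n, m; rewrite eFG.
Qed.

Lemma regular_nseq_rcons (X : finType) (x y : X) :
  regular (fun p => exists n, 0 < n /\ p = nseq n x ++ [:: y]).
Proof.
apply: regular_ext (regular_cat (regularI (@regular_nonempty X) (regular_nseq x)) (regular_seq1 y)).
move=> p; split=> [[u [v [-> [u0 [n eq_u]] ->]]]|[n [n0 ->]]].
  by exists n; rewrite eq_u; split=> //; case: n eq_u => // /u0.
by apply: lcat_cat => //; split; [case: n n0 | exists n].
Qed.

Lemma regular_pad_nf : regular (fun p => exists n m, 0 < n + m /\ p = pad (nf n m) (nf n m)).
Proof. exact: regular_family_ext (regular_blocks _ _) pad_nf. Qed.

Lemma regular_pad_nf_b :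
  regular (fun p => exists n m, 0 < n + m /\ p = pad (nf n m) (nf n m.+1)).
Proof.
apply: (regular_family_ext (G := fun n m => (nseq n AA ++ nseq m BB) ++ [:: (None, Some Lb)])).
  apply: regular_ext (regular_cat (regular_blocks AA BB) (regular_seq1 (None, Some Lb))).
  move=> p; split=> [[u [v [-> [n [m [nm0 ->]]] ->]]]|[n [m [nm0 ->]]]]; first by exists n, m.
  by apply: lcat_cat => //; exists n, m.
by move=> n m; rewrite -pad_nf_rcons /nf -[m.+1]addn1 nseqD catA.
Qed.

Lemma regular_pad_nf_a : k <= 1 ->
  regular (fun p => exists n m, 0 < n + m /\ p = pad (nf n m) (nf (n + k ^ m) m)).
Proof.
move=> k_le1; apply: regular_ext (fun p => iff_sym (ex_pos_split _ p)) (regularU _ _).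
  apply: regular_ext (regular_nseq_rcons AA (None, Some La)) => p.
  by split=> -[n [n0 ->]]; exists n; rewrite expn0 addn1 pad_nf_a.
have [->|->] : k = 0 \/ k = 1 by lia.
- apply: regular_ext (regular_cat (regular_nseq AA)
                        (regular_cat (regular_seq1 BB) (regular_nseq BB))) => p.
  split=> [[u [v [-> [n ->] [_ [_ [-> -> [m ->]]]]]]]|[n [m ->]]].
    by exists n, m; rewrite exp0n // addn0 pad_nf.
  rewrite exp0n // addn0 pad_nf.
  by apply: lcat_cat; [exists n | apply: (@lcat_cat _ _ _ [:: BB]) => //; exists m].
- apply: regular_ext (regular_cat (regular_nseq AA) (regular_cat (regular_seq1 (Some Lb, Some La))
                        (regular_cat (regular_nseq BB) (regular_seq1 (None, Some Lb))))) => p.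
  split=> [[u [v [-> [n ->] [_ [_ [-> -> [_ [_ [-> [m ->] ->]]]]]]]]]|[n [m ->]]].
    by exists n, m; rewrite exp1n addn1 pad_nf_ab.
  rewrite exp1n addn1 pad_nf_ab; apply: lcat_cat; first by exists n.
  by apply: (@lcat_cat _ _ _ [:: _]) => //; apply: lcat_cat => //; exists m.
Qed.

Lemma regular_Lmult_nf c : k <= 1 -> regular (Lmult R (fun x => [:: x]) is_nf c).
Proof.
move=> k_le1; apply: regular_ext (fun p => iff_sym (Lmult_nfE c p)) _.
case: c => [[]|] /=.
- by apply: (regular_family_ext (regular_pad_nf_a k_le1)) => n m; rewrite nform_nf_rcons.
- by apply: (regular_family_ext regular_pad_nf_b) => n m; rewrite nform_nf_rcons.
- by apply: (regular_family_ext regular_pad_nf) => n m; rewrite cats0 nformK.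
Qed.

Lemma relk_prefix_automatic : k <= 1 -> prefix_automatic R.
Proof.
move=> k_le1; exists ab, (fun x => [:: x]), is_nf; split.
  split.
  - by split=> // x y /pcong_aexp_count [_]; case: x; case: y.
  - by move=> _ [n [m [nm0 ->]]]; case: n m nm0 => [|n] [|m].
  - exact: regular_blocks.
  - move=> w w0; exists (nform k w); split; first exact: is_nf_nform.
    by rewrite phi_seq1; apply/pcong_sym/pcong_nform.
  - by move=> c; apply: regular_Lmult_nf.
exact: regular_ext (fun p => iff_sym (Lpref_nfE p)) regular_pad_nf.
Qed.

End PrefixAutomatic.

Section Counting.
Variable k : nat.
Hypothesis k_gt0 : 0 < k.
Local Notation R := (relk k).

Lemma expn_count_gt0 w : 0 < k ^ count_mem Lb w.
Proof. by rewrite expn_gt0 k_gt0. Qed.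

Lemma aexp_le w : aexp k w <= size w * k ^ count_mem Lb w.
Proof.
elim: w => [|[] w IH] //=; rewrite ?add0n ?add1n ?expnS.
- by rewrite mulSn -addn1 addnC leq_add // expn_count_gt0.
- by rewrite mulnCA leq_mul // (leq_trans IH) // leq_mul2r leqnSn orbT.
Qed.

Lemma weight_cat u v : weight k u + weight k v <= weight k (u ++ v).
Proof.
rewrite /weight aexp_cat count_cat.
by have := expn_count_gt0 u; nia.
Qed.

Definition nf_bound E := (E * k ^ E).+1 ^ 2 * E.+1 ^ 2.

Lemma count_short_completions E Q (ps : seq (seq ab)) :
  uniq [seq (aexp k p, count_mem Lb p) | p <- ps] ->
  (forall p, p \in ps -> exists X Y,
     [/\ size X <= E, size Y <= E & pcong R (p ++ X) (Q ++ Y)]) ->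
  size ps <= nf_bound E.
Proof.
move=> uniq_ps short.
pose A := (E * k ^ E).+1.
(* Solving the invariants of p ++ X = Q ++ Y for those of p. *)
pose f (x : 'I_A * 'I_A * 'I_E.+1 * 'I_E.+1) :=
  let: (aX, aY, bX, bY) := x in
  let b := count_mem Lb Q + bY - bX in
  (aexp k Q + k ^ count_mem Lb Q * aY - k ^ b * aX, b).
have -> : nf_bound E = size (codom f).
  by rewrite size_codom !card_prod !card_ord /nf_bound -!mulnn !mulnA.
rewrite -(size_map (fun p => (aexp k p, count_mem Lb p))).
apply: uniq_leq_size => // _ /mapP [p /short [X [Y [le_X le_Y congr_XY]]] ->].
have aexp_lt Z : size Z <= E -> aexp k Z < A.
  move=> le_Z; rewrite ltnS (leq_trans (aexp_le Z)) // leq_mul // leq_pexp2l //.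
  exact: leq_trans (count_size _ _) le_Z.
have count_lt Z : size Z <= E -> count_mem Lb Z < E.+1.
  by move=> le_Z; rewrite ltnS (leq_trans (count_size _ _)).
have [eq_a eq_b] := pcong_aexp_count congr_XY; rewrite !aexp_cat !count_cat in eq_a eq_b.
suff -> : (aexp k p, count_mem Lb p) = f (Ordinal (aexp_lt X le_X), Ordinal (aexp_lt Y le_Y),
                                          Ordinal (count_lt X le_X), Ordinal (count_lt Y le_Y)).
  exact: codom_f.
have eq_bp : count_mem Lb p = count_mem Lb Q + count_mem Lb Y - count_mem Lb X by lia.
rewrite /f /= -eq_bp; congr pair.
by move: eq_a; set aQY := _ * aexp k Y; set apX := _ * aexp k X; lia.
Qed.

End Counting.

Section LengthDifference.
Variable k : nat.
Hypothesis k_gt0 : 0 < k.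
Local Notation R := (relk k).
Variables (B : finType) (g : B -> seq ab) (L : seq B -> Prop).
Hypothesis g_neq0 : forall x, g x <> [::].

Lemma size_le_weight_phi u : size u <= weight k (phi g u).
Proof.
elim: u => [|x u IH] //; rewrite -cat1s phi_cat (leq_trans _ (weight_cat k_gt0 _ _)) //.
by rewrite size_cat leq_add // weight_gt0 // /phi /= cats0.
Qed.

Lemma weight_phi_take u t1 t2 : t1 < t2 -> t2 <= size u ->
  weight k (phi g (take t1 u)) < weight k (phi g (take t2 u)).
Proof.
move=> lt_t12 le_t2.
rewrite -(subnKC (ltnW lt_t12)) takeD phi_cat.
apply: leq_trans (weight_cat k_gt0 _ _); rewrite -addn1 leq_add2l weight_gt0 //.
apply: phi_neq0 => //; apply/eqP; rewrite -size_eq0 size_take size_drop -lt0n.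
by case: ifP => _; rewrite subn_gt0 // (leq_trans lt_t12 le_t2).
Qed.

Lemma prefix_completion_bound E T u Q :
  (forall t, T < t <= size u -> exists X Y,
     [/\ size X <= E, size Y <= E & pcong R (phi g (take t u) ++ X) (Q ++ Y)]) ->
  size u <= T + nf_bound k E.
Proof.
move=> short; case: (leqP (size u) T) => [le_uT|lt_Tu]; first exact: leq_trans le_uT (leq_addr _ _).
pose prefixes := [seq phi g (take t u) | t <- iota T.+1 (size u - T)].
have : size prefixes <= nf_bound k E.
  apply: (count_short_completions k_gt0 (Q := Q)).
  - rewrite -map_comp map_inj_in_uniq ?iota_uniq // => t1 t2.
    rewrite !mem_iota => /andP [_ le_t1] /andP [_ le_t2] /= [eq_a eq_b].
    have weight_eq : weight k (phi g (take t1 u)) = weight k (phi g (take t2 u)).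
      by rewrite /weight eq_a eq_b.
    have [le_t1u le_t2u] : t1 <= size u /\ t2 <= size u by lia.
    case: (ltngtP t1 t2) => // [lt_t12|lt_t21].
      by have := weight_phi_take lt_t12 le_t2u; rewrite weight_eq ltnn.
    by have := weight_phi_take lt_t21 le_t1u; rewrite weight_eq ltnn.
  - by move=> p /mapP [t]; rewrite mem_iota => /andP [? ?] ->; apply: short; lia.
by rewrite size_map size_iota; lia.
Qed.

Local Notation word c := (oapp (fun x => [:: x]) [::] c).

Lemma Lmult_fellow c (M : dfa (option B * option B)%type) al be t :
  (forall p, dfa_accepts M p <-> Lmult R g L c p) -> Lmult R g L c (pad al be) ->
  exists r r', [/\ size r < #|dfa_state M|, size r' < #|dfa_state M| &
    pcong R (phi g (take t al ++ r ++ word c)) (phi g (take t be ++ r'))].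
Proof.
move=> HM /HM acc.
have : dfa_final (dfa_run M (dfa_run M (dfa_start M) (take t (pad al be))) (drop t (pad al be))).
  by rewrite -dfa_run_cat cat_take_drop.
move=> /dfa_run_short [z lt_z]; rewrite -dfa_run_cat => /HM [al' [be' [_ _ cong_ab]]].
rewrite take_pad => /pad_cat_suffix [r [r' [eq_al eq_be le_r le_r']]].
exists r, r'; split; [exact: leq_ltn_trans lt_z | exact: leq_ltn_trans lt_z |].
by move: cong_ab; rewrite eq_al eq_be -catA.
Qed.

Lemma Lmult_size_bound : (forall c, regular (Lmult R g L c)) ->
  exists D, forall c al be, Lmult R g L c (pad al be) ->
    size al <= size be + D /\ size be <= size al + D.
Proof.
move=> /fin_all_exists [M HM].
pose E c := #|dfa_state (M c)| * gen_size g.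
exists (\max_c nf_bound k (E c)) => c al be Lm.
have le_D : nf_bound k (E c) <= \max_c nf_bound k (E c).
  exact: (@leq_bigmax _ (fun c => nf_bound k (E c))).
have size_r r : size r < #|dfa_state (M c)| -> size (phi g r) <= E c.
  by move=> lt_r; rewrite (leq_trans (size_phi g r)) // leq_mul2r ltnW ?orbT.
have size_rc r : size r < #|dfa_state (M c)| -> size (phi g (r ++ word c)) <= E c.
  move=> lt_r; rewrite (leq_trans (size_phi g _)) // leq_mul2r size_cat.
  by case: c {Lm le_D size_r} lt_r => [x|] /= lt_r; rewrite ?addn1 ?addn0 ?lt_r ?(ltnW lt_r) orbT.
split.
- apply: leq_trans (leq_add (leqnn _) le_D); apply: (@prefix_completion_bound _ _ _ (phi g be)).
  move=> t /andP [lt_bt _]; have [r [r' [lt_r lt_r' cong]]] := Lmult_fellow t (HM c) Lm.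
  exists (phi g (r ++ word c)), (phi g r'); split; rewrite ?size_rc ?size_r //.
  by rewrite -!phi_cat -(take_oversize (ltnW lt_bt)).
- apply: leq_trans (leq_add (leqnn _) le_D); apply: (@prefix_completion_bound _ _ _ (phi g al)).
  move=> t /andP [lt_at _]; have [r [r' [lt_r lt_r' cong]]] := Lmult_fellow t (HM c) Lm.
  exists (phi g r'), (phi g (r ++ word c)); split; rewrite ?size_rc ?size_r //.
  by rewrite -!phi_cat -(take_oversize (ltnW lt_at)); apply: pcong_sym.
Qed.

End LengthDifference.

Lemma expn_gt_linear k A B : 1 < k -> exists j, A * j.+1 + B < k ^ j.+1.
Proof.
move=> k_gt1; pose p := (2 * A + B).+1.
exists (p * 2).-1; rewrite prednK ?muln_gt0 // expnM.
have : p.+1 * p.+1 <= (k ^ p) ^ 2 by rewrite -mulnn leq_mul // ltn_expl.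
move: (_ ^ 2) => K; rewrite /p; nia.
Qed.

Section RepresentativeLengths.
Variable k : nat.
Hypothesis k_gt0 : 0 < k.
Local Notation R := (relk k).
Variables (B : finType) (g : B -> seq ab) (L : seq B -> Prop) (D : nat).
Hypothesis g_neq0 : forall x, g x <> [::].
Hypothesis L_neq0 : forall al, L al -> al <> [::].
Hypothesis L_rep : forall w, w <> [::] -> exists al, L al /\ pcong R (phi g al) w.
Hypothesis Lmult_size : forall c al be, Lmult R g L c (pad al be) ->
  size al <= size be + D /\ size be <= size al + D.

Lemma L_letter y : exists x, L [:: x] /\ pcong R (phi g [:: x]) [:: y].
Proof.
have [al [L_al cong_al]] := L_rep (w := [:: y]) ltac:(by []).
have : size al <= 1.
  (* a representative of a letter has weight 1 *)
  have [eq_a eq_b] := pcong_aexp_count cong_al.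
  rewrite (leq_trans (size_le_weight_phi k_gt0 g_neq0 al)) // /weight eq_a eq_b.
  by case: y {cong_al eq_a eq_b} => /=; rewrite ?muln0.
by case: al L_al cong_al => [/L_neq0 //|x [|//]] L_x cong_x _; exists x.
Qed.

Lemma L_rep_rcons y v u : L v -> pcong R (phi g v) u ->
  exists v', [/\ L v', pcong R (phi g v') (u ++ [:: y]),
                 size v <= size v' + D & size v' <= size v + D].
Proof.
move=> L_v cong_v; have [x [L_x cong_x]] := L_letter y.
have [v' [L_v' cong_v']] := L_rep (w := u ++ [:: y]) ltac:(by case: u {cong_v}).
suff [] : size v <= size v' + D /\ size v' <= size v + D by exists v'.
apply: (@Lmult_size (Some x)); exists v, v'; split=> //=.
rewrite phi_cat; apply: pcong_trans (pcong_sym cong_v').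
exact: pcong_cat.
Qed.

Lemma L_rep_nseq y i v u : L v -> pcong R (phi g v) u ->
  exists v', [/\ L v', pcong R (phi g v') (u ++ nseq i y),
                 size v <= size v' + i * D & size v' <= size v + i * D].
Proof.
move=> L_v cong_v; elim: i => [|i [v1 [L_v1 cong_v1 le_v le_v1]]].
  by exists v; rewrite cats0 mul0n !addn0.
have [v2 [L_v2 cong_v2 le_v1' le_v2]] := L_rep_rcons y L_v1 cong_v1.
exists v2; split=> //; first by rewrite -addn1 nseqD catA.
all: rewrite mulSn; lia.
Qed.

Lemma expn_le_linear j : k ^ j.+1 <= gen_size g * (1 + (2 * j + 3) * D).
Proof.
have K_gt0 : 0 < k ^ j.+1 by rewrite expn_gt0 k_gt0.
have /L_rep [v0 [L_v0 cong_v0]] : nseq (k ^ j.+1) La <> [::] by case: (k ^ j.+1) K_gt0.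
have [v [L_v cong_v le_v0 _]] := L_rep_nseq Lb j.+1 L_v0 cong_v0.
have [xb [L_xb cong_xb]] := L_letter Lb.
have [z [L_z cong_z _ le_z]] := L_rep_nseq Lb j L_xb cong_xb.
have [z' [L_z' cong_z' _ le_z']] := L_rep_rcons La L_z cong_z.
have [le_vz' _] : size v <= size z' + D /\ size z' <= size v + D.
  apply: (@Lmult_size None); exists v, z'; split=> //; rewrite cats0.
  apply: pcong_trans cong_v (pcong_trans _ (pcong_sym cong_z')).
  have := pcong_nform k (w := nf 0 j.+1 ++ [:: La]) ltac:(by []).
  by rewrite nform_nf_rcons add0n => /pcong_sym.
have le_K : k ^ j.+1 <= size (phi g v0).
  have [eq_a eq_b] := pcong_aexp_count cong_v0.
  by have := aexp_le k_gt0 (phi g v0); rewrite eq_a eq_b aexp_nseqa count_nseq mul0n muln1.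
have := size_phi g v0; rewrite /= in le_z; nia.
Qed.

End RepresentativeLengths.

Theorem relk_not_automatic k : 1 < k -> ~ automatic (relk k).
Proof.
move=> k_gt1 [B [g [L [[g_neq0 _] L_neq0 _ L_rep reg_Lmult]]]].
have [D Lmult_size] := Lmult_size_bound (ltnW k_gt1) g_neq0 reg_Lmult.
have [j] := expn_gt_linear (2 * @gen_size ab B g * D) (@gen_size ab B g * (1 + D)) k_gt1.
apply/negP; rewrite -leqNgt.
apply: leq_trans (expn_le_linear (ltnW k_gt1) g_neq0 L_neq0 L_rep Lmult_size j) _.
nia.
Qed.

Theorem theorem3p1p9 (k : nat) :
  prefix_automatic (relk k) <-> (k <= 1)%N.
Proof.
split; last exact: relk_prefix_automatic.
move=> [B [g [L [auto_L _]]]]; rewrite leqNgt; apply/negP => k_gt1.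
by apply: relk_not_automatic k_gt1 _; exists B, g, L.
Qed.
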